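(* Let $n\ge1$ and let $(f_3,\pi_1,\pi_2)$ be a triple where $f_3$ is a pairing of $[n]\cup[\hat n]$, $\pi_1$ is a set partition of $[n]\cup[\hat n]$ stable by $f_1$ and $f_3$, and $\pi_2$ is a set partition of $[n]\cup[\hat n]$ stable by $f_2$ and $f_3$, all blocks of both having even size. Then every block of $\pi_1$ and every block of $\pi_2$ contains as many hat numbers as non-hat numbers.
   Context: The ground set is $[n]\cup[\hat n]=\{1,\dots,n,\hat1,\dots,\hat n\}$; elements $1,\dots,n$ are non-hat numbers and $\hat1,\dots,\hat n$ are hat numbers. A pairing is a fixed-point-free involution. $f_1=(1\,\hat n)(2\,\hat1)(3\,\hat2)\cdots(n\,\widehat{n-1})$ and $f_2=(1\,\hat1)(2\,\hat2)\cdots(n\,\hat n)$. A set partition is stable by a permutation $f$ if $f$ maps each block onto itself. *)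

From mathcomp Require Import all_boot.
Set Implicit Arguments. Unset Strict Implicit. Unset Printing Implicit Defensive.

(* Ground set [n] ∪ [n^]: inl i is the non-hat number i+1, inr i is the hat
   number (i+1)^, for i : 'I_n. *)
Definition ground (n : nat) : finType := ('I_n + 'I_n)%type.

Definition is_hat n (x : ground n) : bool := if x is inr _ then true else false.

Definition pairing n (f : ground n -> ground n) : Prop :=
  (forall x, f (f x) = x) /\ (forall x, f x != x).

(* f1 = (1 n^)(2 1^)(3 2^)...(n (n-1)^): non-hat k <-> hat (k-1), 1 <-> n^ *)
Definition f1 n (x : ground n) : ground n :=
  match x with
  | inl i => inr (ord_pred i)
  | inr j => inl (ordS j)
  end.

Definition f2 n (x : ground n) : ground n :=
  match x with
  | inl i => inr i
  | inr j => inl j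
  end.

Definition set_partition n (P : {set {set ground n}}) : Prop :=
  partition P [set: ground n].

Definition stable_by n (P : {set {set ground n}}) (f : ground n -> ground n) : Prop :=
  forall B, B \in P -> f @: B = B.

Definition even_blocks n (P : {set {set ground n}}) : Prop :=
  forall B, B \in P -> ~~ odd #|B|.

Definition balanced_blocks n (P : {set {set ground n}}) : Prop :=
  forall B, B \in P ->
    #|[set x in B | is_hat x]| = #|[set x in B | ~~ is_hat x]|.

From mathcomp Require Import all_boot.

(* Only the stability under f1 and f2 matters: both are involutions exchanging hat
   and non-hat numbers, so on a stable block they inject the hat numbers into the
   non-hat numbers and conversely. *)

Lemma card_stable_swap (T : finType) (p : pred T) (f : T -> T) (B : {set T}) :
  injective f -> (forall x, p (f x) = ~~ p x) -> f @: B = B ->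
  #|[set x in B | p x]| = #|[set x in B | ~~ p x]|.
Proof.
move=> finj fp fB.
have card_swap_le q : (forall x, q (f x) = ~~ q x) ->
    #|[set x in B | q x]| <= #|[set x in B | ~~ q x]|.
  move=> fq; rewrite -(card_imset _ finj); apply: subset_leq_card.
  apply/subsetP=> y /imsetP[x]; rewrite inE => /andP[xB qx] ->.
  by rewrite inE fq qx andbT -fB imset_f.
apply/eqP; rewrite eqn_leq card_swap_le //.
have -> : [set x in B | p x] = [set x in B | ~~ ~~ p x].
  by apply/setP=> x; rewrite !inE negbK.
by apply: card_swap_le => x; rewrite fp.
Qed.

Lemma f1K n : involutive (@f1 n).
Proof. by case=> i /=; rewrite ?ord_predK ?ordSK. Qed.

Lemma f2K n : involutive (@f2 n).
Proof. by case. Qed.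

Lemma is_hat_f1 n (x : ground n) : is_hat (f1 x) = ~~ is_hat x.
Proof. by case: x. Qed.

Lemma is_hat_f2 n (x : ground n) : is_hat (f2 x) = ~~ is_hat x.
Proof. by case: x. Qed.

Lemma balanced_of_stable n (P : {set {set ground n}}) (f : ground n -> ground n) :
  involutive f -> (forall x, is_hat (f x) = ~~ is_hat x) ->
  stable_by P f -> balanced_blocks P.
Proof.
by move=> fK fh Pf B PB; apply: card_stable_swap (inv_inj fK) fh (Pf B PB).
Qed.

Theorem lemma1 (n : nat) (f3 : ground n -> ground n)
  (pi1 pi2 : {set {set ground n}}) :
  0 < n ->
  pairing f3 ->
  set_partition pi1 -> stable_by pi1 (@f1 n) -> stable_by pi1 f3 ->
  set_partition pi2 -> stable_by pi2 (@f2 n) -> stable_by pi2 f3 ->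
  even_blocks pi1 -> even_blocks pi2 ->
  balanced_blocks pi1 /\ balanced_blocks pi2.
Proof.
move=> _ _ _ pi1_f1 _ _ pi2_f2 _ _ _; split.
- exact: balanced_of_stable (@f1K n) (@is_hat_f1 n) pi1_f1.
- exact: balanced_of_stable (@f2K n) (@is_hat_f2 n) pi2_f2.
Qed.
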